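(* Let $\mathcal{A}$ be a unital commutative C*-algebra with identity $1$, let $d\in\mathbb{N}$, and let $\mathcal{A}^d$ be the standard Hilbert C*-module over $\mathcal{A}$. Let $n\geq d$ and let $\{\tau_j\}_{j=1}^n$ be a collection of vectors in $\mathcal{A}^d$ with $\langle \tau_j,\tau_j\rangle=1$ for all $1\leq j\leq n$. Then, for every $m\in\mathbb{N}$, \[ \sum_{j=1}^n\sum_{k=1}^n\|\langle \tau_j, \tau_k\rangle \|^{2m}\geq \sum_{j=1}^n\sum_{k=1}^n\langle \tau_j, \tau_k\rangle ^{m}\langle \tau_k, \tau_j\rangle ^{m}\geq \frac{n^2}{{d+m-1\choose m}}, \] in particular \[ \sum_{j=1}^n\sum_{k=1}^n\|\langle \tau_j, \tau_k\rangle \|^{2} \geq \sum_{j=1}^n\sum_{k=1}^n\langle \tau_j, \tau_k\rangle \langle \tau_k, \tau_j\rangle \geq \frac{n^2}{d}. \] Further (for $n\geq 2$), for every $m\in\mathbb{N}$, \[ \max _{1\leq j,k \leq n,\, j\neq k}\|\langle \tau_j, \tau_k\rangle \|^{2m}\geq \frac{1}{n-1}\left[\frac{n}{{d+m-1\choose m}}-1\right], \] and in particular \[ \max _{1\leq j,k \leq n,\, j\neq k}\|\langle \tau_j, \tau_k\rangle \|^{2}\geq\frac{n-d}{d(n-1)}. \]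
   Context: The standard Hilbert C*-module $\mathcal{A}^d$ consists of $d$-tuples $(a_1,\dots,a_d)$ of elements of $\mathcal{A}$, with left action $a\cdot(a_1,\dots,a_d)=(aa_1,\dots,aa_d)$ and $\mathcal{A}$-valued inner product $\langle (a_r)_{r=1}^d,(b_r)_{r=1}^d\rangle=\sum_{r=1}^d a_rb_r^*$ (linear in the first variable, conjugate-linear in the second). Inequalities between elements of $\mathcal{A}$ refer to the usual order on self-adjoint elements of the C*-algebra, and a real number $c$ appearing in such an inequality is identified with $c\cdot 1\in\mathcal{A}$; $\|\cdot\|$ is the C*-norm of $\mathcal{A}$. *)

From HB Require Import structures.
From mathcomp Require Import all_boot all_order all_algebra.
From mathcomp Require Import complex.
From mathcomp Require Import reals.
Set Implicit Arguments. Unset Strict Implicit. Unset Printing Implicit Defensive.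
Import Order.TTheory GRing.Theory Num.Theory.
Local Open Scope ring_scope.

Record ucCstarAlg (R : realType) := UcCstarAlg {
  cs_car :> comAlgType R[i];
  cs_star : cs_car -> cs_car;
  cs_norm : cs_car -> R;
  cs_starD : forall a b, cs_star (a + b) = cs_star a + cs_star b;
  cs_starZ : forall (c : R[i]) a, cs_star (c *: a) = (c^*)%C *: cs_star a;
  cs_starM : forall a b, cs_star (a * b) = cs_star b * cs_star a;
  cs_starK : forall a, cs_star (cs_star a) = a;
  cs_norm_ge0 : forall a, 0 <= cs_norm a;
  cs_norm_eq0 : forall a, cs_norm a = 0 -> a = 0;
  cs_normD : forall a b, cs_norm (a + b) <= cs_norm a + cs_norm b;
  cs_normZ : forall (c : R[i]) a, cs_norm (c *: a) = ComplexField.Normc.normc c * cs_norm a;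
  cs_normM : forall a b, cs_norm (a * b) <= cs_norm a * cs_norm b;
  cs_cstar : forall a, cs_norm (cs_star a * a) = cs_norm a ^+ 2;
  cs_complete : forall u : nat -> cs_car,
    (forall e : R, 0 < e -> exists N, forall p q, (N <= p)%N -> (N <= q)%N ->
        cs_norm (u p - u q) < e) ->
    exists l, forall e : R, 0 < e -> exists N, forall p, (N <= p)%N ->
        cs_norm (u p - l) < e
}.

Section Cstar.
Variables (R : realType) (A : ucCstarAlg R).

Definition cs_spectrum (a : A) (lam : R[i]) : Prop :=
  ~ exists b : A, (a - lam%:A) * b = 1.

(* positive elements: self-adjoint with spectrum in [0, +oo)
   (on R[i], 0 <= lam means lam is real and nonnegative) *)
Definition cs_pos (a : A) : Prop :=
  cs_star a = a /\ forall lam : R[i], cs_spectrum a lam -> 0 <= lam.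

Definition cs_le (a b : A) : Prop := cs_pos (b - a).

Definition cs_real (c : R) : A := (c%:C)%C%:A.

Definition cs_ip (d : nat) (x y : 'I_d -> A) : A :=
  \sum_(r < d) x r * cs_star (y r).

End Cstar.

(* Expand <tau_j, tau_k>^m by the multinomial theorem over sorted index
   tuples s of length m (there are C(d+m-1, m) of them), with multinomial
   weights w_s.  Writing G s t := sum_j tau_j^s (tau_j^t)^*, this gives
     sum_{j,k} <tau_j,tau_k>^m <tau_k,tau_j>^m = sum_{s,t} w_s w_t G s t (G s t)^*.
   All off-diagonal terms are positive, and the diagonal elements a_s := w_s G s s
   are self-adjoint with sum_s a_s = n since the tau_j are unit vectors, so
   Lagrange's identity sum_{s,t} (a_s - a_t)^2 >= 0 yields the lower bound
   n^2 / C(d+m-1, m).  The upper bound and the bound on the maximal off-diagonal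
   entry follow from the C*-identity |a a^*| = |a|^2.

   Positivity is handled through the norm cone: h >= 0 if h = h^* and
   |r - h| <= r for some r.  This cone is visibly closed under sums and
   contained in the spectral one.  That squares of self-adjoint elements lie
   in it needs no spectral theory: with t = 1 - s for approximate fixed points s
   of s |-> (x^2 + s^2)/2, one has t^2 ~ 1 - x^2 and |t|^2 <= |x^2 + t^2|,
   whence |1 - x^2| <= 1 when |x|^2 <= 1/2. *)

From HB Require Import structures.
From mathcomp Require Import all_boot all_order all_algebra.
From mathcomp Require Import complex.
From mathcomp Require Import reals.
From mathcomp Require Import lra ring.
Import Order.TTheory GRing.Theory Num.Theory.
Local Open Scope ring_scope.

Set Implicit Arguments. Unset Strict Implicit. Unset Printing Implicit Defensive.

Lemma bernoulli (F : realDomainType) (h : F) n : 0 <= h -> 1 + n%:R * h <= (1 + h) ^+ n.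
Proof.
move=> h0; elim: n => [|n IH]; first by rewrite mul0r addr0 expr0.
rewrite exprS -natr1; apply: le_trans (ler_wpM2l _ IH); last by rewrite addr_ge0.
have := ler0n F n; nra.
Qed.

Lemma exprn_small (F : archiRealFieldType) (x e : F) :
  0 <= x -> x < 1 -> 0 < e -> exists n, x ^+ n < e.
Proof.
move=> x0 x1 e0; set h := 1 - x.
have h0 : 0 < h by rewrite subr_gt0.
pose n := Num.bound (e * h)^-1.
have n_large : (e * h)^-1 < n%:R.
  by apply: archi_boundP; rewrite invr_ge0 ltW ?mulr_gt0.
exists n; have xn_ge0 : 0 <= x ^+ n := exprn_ge0 n x0.
have xn_le : x ^+ n * (1 + n%:R * h) <= 1.
  have x1h : x * (1 + h) <= 1 by rewrite /h; nra.
  apply: le_trans (ler_wpM2l xn_ge0 (bernoulli n (ltW h0))) _.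
  by rewrite -exprMn exprn_ile1 // mulr_ge0 // addr_ge0 // ltW.
have ehp : 0 < e * h by rewrite mulr_gt0.
have : 1 < n%:R * (e * h) by rewrite -(ltr_pM2r ehp) mulVf ?gt_eqF in n_large.
have := ler0n F n; move: xn_le xn_ge0; set p := x ^+ n; set q : F := n%:R; nra.
Qed.

Lemma geom_tail_le (F : realFieldType) (x : F) q p :
  0 <= x -> x < 1 -> \sum_(q <= i < p) x ^+ i <= x ^+ q / (1 - x).
Proof.
move=> x0 x1; have d0 : 0 < 1 - x by rewrite subr_gt0.
rewrite ler_pdivlMr // -[q in X in X * _]add0n big_addn big_mkord.
under eq_bigr do rewrite exprD.
rewrite -mulr_suml mulrAC ler_piMl ?exprn_ge0 //.
have : 1 - x ^+ (p - q) <= 1 by rewrite lerBlDr lerDl exprn_ge0.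
by rewrite -opprB subrX1 mulrC -mulrN opprB.
Qed.

Lemma sum_sqr_diff (S : comPzRingType) (I : finType) (P : {pred I}) (a : I -> S) :
  \sum_(i in P) \sum_(j in P) (a i - a j) ^+ 2
    = ((\sum_(i in P) a i ^+ 2) *+ #|P| - (\sum_(i in P) a i) ^+ 2) *+ 2.
Proof.
have sqrB i j : (a i - a j) ^+ 2 = a i ^+ 2 + a j ^+ 2 - (a i * a j) *+ 2.
  by rewrite sqrrB addrAC mulr2n.
under eq_bigr do under eq_bigr do rewrite sqrB.
under eq_bigr do rewrite sumrB big_split /= sumr_const sumrMnl.
by rewrite sumrB big_split /= sumr_const !sumrMnl expr2 big_distrlr mulrnBl mulr2n.
Qed.

Lemma sum_offdiag_le_bigmax (F : realDomainType) n (f : 'I_n -> 'I_n -> F) :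
  \sum_(j < n) \sum_(k < n | j != k) f j k
    <= (n * n.-1)%:R * \big[Num.max/0]_(j < n) \big[Num.max/0]_(k < n | j != k) f j k.
Proof.
set M := \big[Num.max/0]_(j < n) _.
have leM j k : j != k -> f j k <= M.
  by move=> jk; apply: le_trans (le_bigmax _ _ j); apply: le_bigmax_cond.
apply: le_trans (_ : \sum_(j < n) \sum_(k < n | j != k) M <= _).
  by apply: ler_sum => j _; apply: ler_sum => k; apply: leM.
rewrite mulr_natl mulnC mulrnA -[n in _ *+ n]card_ord -sumr_const.
apply: ler_sum => j _; rewrite sumr_const.
suff -> : #|[pred k : 'I_n | j != k]| = n.-1 by [].
by rewrite -[n in n.-1]card_ord -(cardC1 j); apply: eq_card => k; rewrite !inE eq_sym.
Qed.

Definition sorted_tuples d m : {set m.-tuple 'I_d} :=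
  [set t : m.-tuple 'I_d | sorted leq (map val t)].

Lemma card_sorted_tuplesE d m : #|sorted_tuples d m| = 'C(d + m - 1, m).
Proof.
case: d => [|d]; last by rewrite card_sorted_tuples addSn subn1 addnC.
case: m => [|m].
  have -> : sorted_tuples 0 0 = setT by apply/setP => t; rewrite !inE tuple0.
  by rewrite cardsT card_tuple.
rewrite add0n subn1 bin_small //; apply/eqP; rewrite -leqn0.
by rewrite (leq_trans (subset_leq_card (subsetT _))) // cardsT card_tuple card_ord exp0n.
Qed.

Section Multinomial.
Variables d m : nat.

Definition sorted_values (f : {ffun 'I_m -> 'I_d}) : m.-tuple 'I_d :=
  sort_tuple (fun i j : 'I_d => (i <= j)%N) [tuple f l | l < m].

Definition multinomial (s : m.-tuple 'I_d) : nat :=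
  #|[set f : {ffun 'I_m -> 'I_d} | sorted_values f == s]|.

Lemma sorted_values_sorted f : sorted_values f \in sorted_tuples d m.
Proof.
rewrite inE sorted_map; apply: sort_sorted => i j; exact: leq_total.
Qed.

Lemma prod_sorted_values (S : comPzSemiRingType) (v : 'I_d -> S) (f : {ffun 'I_m -> 'I_d}) :
  \prod_(l < m) v (f l) = \prod_(i <- sorted_values f) v i.
Proof.
by rewrite (perm_big _ (permEl (perm_sort _ _))) big_map big_enum.
Qed.

Lemma expr_sum_multinomial (S : comPzSemiRingType) (v : 'I_d -> S) :
  (\sum_(i < d) v i) ^+ m
    = \sum_(s in sorted_tuples d m) (\prod_(i <- s) v i) *+ multinomial s.
Proof.
rewrite -[m in LHS]card_ord -prodr_const bigA_distr_bigA /=.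
rewrite (partition_big sorted_values (mem (sorted_tuples d m))) /=; last first.
  by move=> f _; apply: sorted_values_sorted.
apply: eq_bigr => s _; rewrite /multinomial cardsE -sumr_const.
by apply: eq_bigr => f /eqP <-; apply: prod_sorted_values.
Qed.

End Multinomial.

Section CstarAlgebra.
Variables (R : realType) (A : ucCstarAlg R).
Local Notation st := (@cs_star R A).
Local Notation nm := (@cs_norm R A).
Local Notation rc := (cs_real A).
Implicit Types (a b h u v x y z : A) (r s t : R).

Lemma cs_star0 : st 0 = 0.
Proof. by apply: (addrI (st 0)); rewrite -cs_starD !addr0. Qed.

Lemma cs_star1 : st 1 = 1.
Proof. by have := cs_starM (st 1) 1; rewrite cs_starK mulr1 cs_starK => {2}->. Qed.

Lemma cs_starMC a b : st (a * b) = st a * st b.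
Proof. by rewrite cs_starM mulrC. Qed.

HB.instance Definition _ :=
  GRing.isNmodMorphism.Build A A st (cs_star0, @cs_starD R A).
HB.instance Definition _ :=
  GRing.isMonoidMorphism.Build A A st (cs_star1, cs_starMC).

Lemma cs_star_alg (c : R[i]) : st c%:A = (c^*)%C%:A.
Proof. by rewrite cs_starZ rmorph1. Qed.

Lemma cs_star_i a : st ('i%C *: a) = - ('i%C *: st a).
Proof. by rewrite cs_starZ -scaleNr; congr (_ *: _); simpc. Qed.

Lemma cs_real0 : rc 0 = 0. Proof. by rewrite /cs_real scale0r. Qed.
Lemma cs_real1 : rc 1 = 1. Proof. by rewrite /cs_real scale1r. Qed.

Lemma cs_realD r s : rc (r + s) = rc r + rc s.
Proof. by rewrite /cs_real rmorphD /= scalerDl. Qed.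

Lemma cs_realM r s : rc (r * s) = rc r * rc s.
Proof. by rewrite /cs_real rmorphM /= mulr_algl scalerA. Qed.

HB.instance Definition _ := GRing.isNmodMorphism.Build R A rc (cs_real0, cs_realD).
HB.instance Definition _ := GRing.isMonoidMorphism.Build R A rc (cs_real1, cs_realM).

Lemma cs_real_nat n : rc n%:R = n%:R.
Proof. exact: rmorph_nat. Qed.

Lemma cs_realB r s : rc (r - s) = rc r - rc s.
Proof. exact: rmorphB. Qed.

Lemma cs_real_half2 : rc 2^-1 * rc 2 = 1.
Proof. by rewrite -cs_realM mulVf ?cs_real1 ?pnatr_eq0. Qed.

Lemma cs_star_real r : st (rc r) = rc r.
Proof. by rewrite cs_star_alg conjc_real. Qed.

Lemma normc_real r : Normc.normc r%:C%C = `|r|.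
Proof. by rewrite /Normc.normc /= expr0n /= addr0 sqrtr_sqr. Qed.

Lemma cs_norm0 : nm 0 = 0.
Proof. by have := cs_normZ 0 (0 : A); rewrite scale0r Normc.normc0 mul0r. Qed.

Lemma cs_normN a : nm (- a) = nm a.
Proof.
rewrite -scaleN1r cs_normZ -[-1](rmorphN1 (@real_complex R)) normc_real.
by rewrite normrN1 mul1r.
Qed.

Lemma cs_normB a b : nm (a - b) <= nm a + nm b.
Proof. by rewrite -(cs_normN b); apply: cs_normD. Qed.

Lemma cs_normBC a b : nm (a - b) = nm (b - a).
Proof. by rewrite -cs_normN opprB. Qed.

Lemma cs_norm_sum (I : Type) (r : seq I) (P : pred I) (F : I -> A) :
  nm (\sum_(i <- r | P i) F i) <= \sum_(i <- r | P i) nm (F i).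
Proof.
elim/big_rec2: _ => [|i y1 y2 _ IH]; first by rewrite cs_norm0.
by apply: le_trans (cs_normD _ _) _; rewrite lerD2l.
Qed.

Lemma cs_norm_star a : nm (st a) = nm a.
Proof.
suff le_star b : nm b <= nm (st b).
  by apply/eqP; rewrite eq_le le_star -{2}[a]cs_starK le_star.
have [->|b_gt0] := eqVneq (nm b) 0; first exact: cs_norm_ge0.
have := cs_normM (st b) b; rewrite cs_cstar expr2.
by rewrite ler_pM2r // lt_def b_gt0 cs_norm_ge0.
Qed.

Lemma cs_norm_mul_star a : nm (a * st a) = nm a ^+ 2.
Proof. by rewrite mulrC cs_cstar. Qed.

Lemma cs_norm_sa_sqr h : st h = h -> nm (h * h) = nm h ^+ 2.
Proof. by move=> sa_h; rewrite -{1}sa_h cs_cstar. Qed.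

Lemma cs_norm1 : nm 1 = 1.
Proof.
have n1_neq0 : nm 1 != 0 by apply: contra_neq (@oner_neq0 A) => /cs_norm_eq0.
by apply: (mulfI n1_neq0); rewrite -expr2 -cs_norm_sa_sqr ?cs_star1 ?mulr1.
Qed.

Lemma cs_norm_real r : nm (rc r) = `|r|.
Proof. by rewrite cs_normZ normc_real cs_norm1 mulr1. Qed.

Lemma cs_norm_realM r a : nm (rc r * a) <= `|r| * nm a.
Proof. by rewrite -cs_norm_real cs_normM. Qed.

Lemma cs_normX a n : nm (a ^+ n) <= nm a ^+ n.
Proof.
elim: n => [|n IH]; first by rewrite !expr0 cs_norm1.
by rewrite !exprS; apply: le_trans (cs_normM _ _) (ler_wpM2l (cs_norm_ge0 _) IH).
Qed.

Lemma cs_norm_expr_mul_star a m : nm (a ^+ m * st a ^+ m) <= nm a ^+ (2 * m).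
Proof.
rewrite -rmorphXn cs_norm_mul_star mulnC exprM.
by rewrite ler_pXn2r ?nnegrE ?exprn_ge0 ?cs_norm_ge0 ?cs_normX.
Qed.

Definition cs_unit a : Prop := exists b, a * b = 1.

Lemma cs_unitN a : cs_unit a -> cs_unit (- a).
Proof. by case=> b ab1; exists (- b); rewrite mulrNN. Qed.

Lemma geom_psum_cauchy z : nm z < 1 -> forall e, 0 < e ->
  exists N, forall p q, (N <= p)%N -> (N <= q)%N ->
    nm (\sum_(k < p) z ^+ k - \sum_(k < q) z ^+ k) < e.
Proof.
move=> z1 e e0; have d0 : 0 < 1 - nm z by rewrite subr_gt0.
have [N zN] := exprn_small (cs_norm_ge0 z) z1 (mulr_gt0 e0 d0).
suff tail p q : (N <= q)%N -> (q <= p)%N ->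
    nm (\sum_(k < p) z ^+ k - \sum_(k < q) z ^+ k) < e.
  exists N => p q Np Nq; have [qp|/ltnW pq] := leqP q p; first exact: tail.
  by rewrite cs_normBC; apply: tail.
move=> Nq qp; rewrite -!(big_mkord xpredT) (big_cat_nat (leq0n q) qp) /=.
rewrite addrAC subrr add0r; apply: le_lt_trans (cs_norm_sum _ _ _) _.
apply: le_lt_trans (ler_sum _ (fun k _ => cs_normX z k)) _.
apply: le_lt_trans (geom_tail_le _ _ (cs_norm_ge0 z) z1) _.
rewrite ltr_pdivrMr //; apply: le_lt_trans zN.
by rewrite ler_wiXn2l ?cs_norm_ge0 // ltW.
Qed.

Lemma cs_unit_1B z : nm z < 1 -> cs_unit (1 - z).
Proof.
move=> z1; have [l psum_l] := cs_complete (geom_psum_cauchy z1).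
exists l; apply/eqP; rewrite -subr_eq0; apply/eqP/cs_norm_eq0/eqP.
rewrite eq_le cs_norm_ge0 andbT; apply/ler_addgt0Pr => e e0; rewrite add0r.
have [N1 lN1] := psum_l (e / 4) (divr_gt0 e0 (ltr0n _ 4)).
have [N2 zN2] := exprn_small (cs_norm_ge0 z) z1 (divr_gt0 e0 (ltr0n _ 2)).
set p := maxn N1 N2; set s := \sum_(k < p) z ^+ k.
have psumE : (1 - z) * s = 1 - z ^+ p by rewrite -opprB mulNr -subrX1 opprB.
have -> : (1 - z) * l - 1 = (1 - z) * (l - s) - z ^+ p.
  by rewrite mulrBr psumE; ring.
apply: le_trans (cs_normB _ _) _.
have z_le2 : nm (1 - z) <= 2.
  by apply: le_trans (cs_normB _ _) _; rewrite cs_norm1 -[2]/(1 + 1) lerD2l ltW.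
have ls : nm (l - s) < e / 4 by rewrite cs_normBC lN1 ?leq_maxl.
have zp : nm (z ^+ p) < e / 2.
  apply: le_lt_trans (cs_normX _ _) (le_lt_trans _ zN2).
  by rewrite ler_wiXn2l ?cs_norm_ge0 ?leq_maxr // ltW.
have := cs_normM (1 - z) (l - s); have := cs_norm_ge0 (l - s).
have := cs_norm_ge0 (1 - z); nra.
Qed.

Lemma cs_unit_subr_alg y mu : nm y < Normc.normc mu -> cs_unit (y - mu%:A).
Proof.
move=> y_lt; have mu_gt0 : 0 < Normc.normc mu := le_lt_trans (cs_norm_ge0 y) y_lt.
have mu_neq0 : mu != 0 by apply: contra_ltN mu_gt0 => /eqP->; rewrite Normc.normc0.
have [b yb] : cs_unit (1 - mu^-1 *: y).
  by apply: cs_unit_1B; rewrite cs_normZ Normc.normcV mulrC ltr_pdivrMr ?mul1r.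
exists (- mu^-1 *: b).
have -> : y - mu%:A = - mu *: (1 - mu^-1 *: y).
  by rewrite scalerBr scalerA mulNr mulfV // scaleNr scaleN1r opprK addrC.
by rewrite -scalerAl -scalerAr yb scalerA mulrNN mulfV // scale1r.
Qed.

Lemma cs_star_addiM x y : st x = x -> st y = y ->
  st (x + 'i%C *: y) * (x + 'i%C *: y) = x * x + y * y.
Proof.
move=> sa_x sa_y; rewrite rmorphD /= cs_star_i sa_x sa_y -mulr_algl.
have ii : ('i%C%:A : A) * 'i%C%:A = -1.
  by rewrite mulr_algl scalerA -expr2 sqr_i scaleN1r.
have -> : (x - 'i%C%:A * y) * (x + 'i%C%:A * y)
    = x * x - ('i%C%:A * 'i%C%:A) * (y * y) by ring.
by rewrite ii mulN1r opprK.
Qed.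

Lemma cs_norm_sqr_le_add_sqr x y : st x = x -> st y = y ->
  nm y ^+ 2 <= nm (x * x + y * y).
Proof.
move=> sa_x sa_y; rewrite -cs_star_addiM // cs_cstar.
rewrite ler_pXn2r ?nnegrE ?cs_norm_ge0 //; set u := x + 'i%C *: y.
have nm_iy : nm ('i%C *: y) = nm y.
  by rewrite cs_normZ /Normc.normc /= expr0n expr1n add0r sqrtr1 mul1r.
have u_im : u - st u = rc 2 * ('i%C *: y).
  rewrite /u rmorphD /= cs_star_i sa_x sa_y opprD opprK addrACA subrr add0r.
  by rewrite rmorph_nat mulr_natl mulr2n.
rewrite -nm_iy -[_ *: y]mul1r -cs_real_half2 -mulrA -u_im.
apply: le_trans (cs_norm_realM _ _) _; rewrite ger0_norm ?invr_ge0 ?ler0n //.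
rewrite mulrC ler_pdivrMr ?ltr0n //.
have := cs_normB u (st u); rewrite cs_norm_star; lra.
Qed.

Lemma cs_unit_sa_subr_alg h lam : st h = h -> complex.Im lam != 0 ->
  cs_unit (h - lam%:A).
Proof.
case: lam => a b /= sa_h b_neq0.
set t := (nm h ^+ 2 + 1) / b.
have bt : b * t = nm h ^+ 2 + 1 by rewrite /t mulrC divfK.
have -> : h - (a +i* b)%C%:A = (h + 'i%C *: rc t) - (a +i* (b + t))%C%:A.
  have -> : 'i%C *: rc t = (0 +i* t)%C%:A by rewrite scalerA; congr (_ *: _); simpc.
  have -> : (a +i* (b + t))%C = (a +i* b)%C + (0 +i* t)%C by simpc.
  by rewrite scalerDl opprD addrACA subrr addr0.
apply: cs_unit_subr_alg.
rewrite -(ltr_pXn2r (_ : 0 < 2)%N) ?nnegrE ?cs_norm_ge0 ?sqrtr_ge0 //.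
rewrite -cs_cstar cs_star_addiM ?cs_star_real // /= sqr_sqrtr ?addr_ge0 ?sqr_ge0 //.
apply: le_lt_trans (cs_normD _ _) _.
rewrite cs_norm_sa_sqr // -rmorphM cs_norm_real -expr2 ger0_norm ?sqr_ge0 //.
rewrite sqrrD -mulr_natl bt; have := sqr_ge0 a; have := sqr_ge0 b; have := sqr_ge0 (nm h); lra.
Qed.

Definition npos_at h r : Prop := st h = h /\ nm (rc r - h) <= r.

Definition npos h : Prop := exists r, npos_at h r.

Lemma npos_at_cs_pos h r : npos_at h r -> cs_pos h.
Proof.
case=> sa_h hr; split=> // lam; case: (boolP (0 <= lam)) => // lam_lt0 spec.
exfalso; apply: spec; case: lam lam_lt0 => a b /= lam_lt0.
have [b0|b_neq0] := eqVneq b 0.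
  2: exact: (cs_unit_sa_subr_alg (lam := (a +i* b)%C) sa_h b_neq0).
move: lam_lt0; rewrite b0 lecE /= eqxx /= -ltNge => a_lt0.
have r_ge0 : 0 <= r := le_trans (cs_norm_ge0 _) hr.
have : cs_unit (rc r - h - rc (r - a)).
  apply: cs_unit_subr_alg; rewrite normc_real ger0_norm; last by lra.
  by apply: le_lt_trans hr _; lra.
by rewrite rmorphB opprB addrC addrA subrK => /cs_unitN; rewrite opprB.
Qed.

Lemma npos_cs_pos h : npos h -> cs_pos h.
Proof. by case=> r /npos_at_cs_pos. Qed.

Lemma npos_at0 : npos_at 0 0.
Proof. by split; rewrite ?rmorph0 ?subr0 ?cs_norm0. Qed.

Lemma npos_atD h1 h2 r1 r2 :
  npos_at h1 r1 -> npos_at h2 r2 -> npos_at (h1 + h2) (r1 + r2).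
Proof.
case=> sa1 n1 [sa2 n2]; split; first by rewrite rmorphD /= sa1 sa2.
by rewrite rmorphD opprD addrACA; apply: le_trans (cs_normD _ _) (lerD n1 n2).
Qed.

Lemma npos_at_realM w h r : 0 <= w -> npos_at h r -> npos_at (rc w * h) (w * r).
Proof.
move=> w_ge0 [sa_h hr]; split; first by rewrite cs_starMC cs_star_real sa_h.
rewrite rmorphM /= -mulrBr; apply: le_trans (cs_norm_realM _ _) _.
by rewrite ger0_norm // ler_wpM2l.
Qed.

Lemma npos_at_real_subr h r : st h = h -> nm h <= r -> npos_at (rc r - h) r.
Proof.
move=> sa_h hr; split; first by rewrite rmorphB /= cs_star_real sa_h.
by rewrite opprB addrC subrK.
Qed.

Lemma npos_at_norm_ge h r t : npos_at h r -> 0 <= t -> t <= nm (rc t + h).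
Proof.
case=> _ hr t_ge0; have r_ge0 : 0 <= r := le_trans (cs_norm_ge0 _) hr.
have := cs_normD (rc (t + r) - (rc t + h)) (rc t + h).
rewrite subrK cs_norm_real ger0_norm ?addr_ge0 //.
have -> : rc (t + r) - (rc t + h) = rc r - h by rewrite rmorphD opprD addrACA subrr add0r.
lra.
Qed.

Lemma nposD h1 h2 : npos h1 -> npos h2 -> npos (h1 + h2).
Proof. by case=> r1 c1 [r2 c2]; exists (r1 + r2); apply: npos_atD. Qed.

Lemma npos_sum (I : Type) (s : seq I) (P : pred I) (F : I -> A) :
  (forall i, P i -> npos (F i)) -> npos (\sum_(i <- s | P i) F i).
Proof. by move=> F_pos; apply: big_ind => //; [exists 0; apply: npos_at0 | apply: nposD]. Qed.

Lemma npos_mulrn h k : npos h -> npos (h *+ k).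
Proof. by move=> h_pos; rewrite -[k]card_ord -sumr_const; apply: npos_sum. Qed.

Lemma npos_realM w h : 0 <= w -> npos h -> npos (rc w * h).
Proof. by move=> w_ge0 [r c]; exists (w * r); apply: npos_at_realM. Qed.

Section SqrtIteration.
Variable x : A.
Hypotheses (sa_x : st x = x) (x_small : nm x ^+ 2 <= 2^-1).

(* A fixed point s satisfies (1 - s) ^+ 2 = 1 - x * x. *)
Fixpoint sqrt_iter n : A :=
  if n is n'.+1 then rc 2^-1 * (x * x + sqrt_iter n' ^+ 2) else 0.

Lemma sqrt_iter_sa n : st (sqrt_iter n) = sqrt_iter n.
Proof.
elim: n => [|n IH] /=; first exact: rmorph0.
by rewrite rmorphM rmorphD rmorphXn /= cs_star_real IH rmorphM /= sa_x.
Qed.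

Lemma cs_norm_sqrt_iter n : nm (sqrt_iter n) <= 2^-1.
Proof.
elim: n => [|n IH] /=; first by rewrite cs_norm0 invr_ge0 ler0n.
apply: le_trans (cs_norm_realM _ _) _; rewrite ger0_norm ?invr_ge0 ?ler0n //.
have : nm (x * x + sqrt_iter n ^+ 2) <= 2^-1 + 2^-1 * 2^-1.
  apply: le_trans (cs_normD _ _) (lerD _ _); first by rewrite cs_norm_sa_sqr.
  by apply: le_trans (cs_normX _ _) _; rewrite expr2 ler_pM ?cs_norm_ge0.
have := cs_norm_ge0 (x * x + sqrt_iter n ^+ 2); nra.
Qed.

Lemma cs_norm_sqrt_iterS n : nm (sqrt_iter n.+1 - sqrt_iter n) <= 2^-1 ^+ n.+1.
Proof.
have half_ge0 : 0 <= 2^-1 :> R by rewrite invr_ge0 ler0n.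
elim: n => [|n IH].
  rewrite /= expr0n addr0 subr0 expr1; apply: le_trans (cs_norm_realM _ _) _.
  rewrite ger0_norm // cs_norm_sa_sqr // ler_piMr // (le_trans x_small) //.
  by rewrite invf_le1 ?ler1n.
have diff_sqr a b : rc 2^-1 * (x * x + a ^+ 2) - rc 2^-1 * (x * x + b ^+ 2)
    = rc 2^-1 * ((a + b) * (a - b)) by ring.
rewrite [sqrt_iter n.+2 - _]diff_sqr; set a := sqrt_iter n.+1; set b := sqrt_iter n.
apply: le_trans (cs_norm_realM _ _) _; rewrite ger0_norm // exprS ler_wpM2l //.
apply: le_trans (cs_normM _ _) _; rewrite -[X in _ <= X]mul1r ler_pM ?cs_norm_ge0 //.
apply: le_trans (cs_normD _ _) _; have := cs_norm_sqrt_iter n.+1.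
have := cs_norm_sqrt_iter n; rewrite -/a -/b; lra.
Qed.

Lemma cs_norm_1B_sqr : nm (1 - x * x) <= 1.
Proof.
apply/ler_addgt0Pr => e e_gt0.
have half_lt1 : 2^-1 < 1 :> R by rewrite invf_lt1 ?ltr1n.
have half_ge0 : 0 <= 2^-1 :> R by rewrite invr_ge0 ler0n.
have e4_gt0 : 0 < e / 4 by rewrite divr_gt0.
have [n small_n] := exprn_small half_ge0 half_lt1 e4_gt0.
set s := sqrt_iter n; set t := 1 - s; set E := rc 2 * (sqrt_iter n.+1 - s).
have sa_t : st t = t by rewrite rmorphB /= cs_star1 sqrt_iter_sa.
have defE : x * x + t * t = 1 + E.
  have iterS : rc 2 * sqrt_iter n.+1 = x * x + s ^+ 2.
    by rewrite /= mulrA (mulrC (rc 2)) cs_real_half2 mul1r.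
  by rewrite /E [rc 2 * _]mulrBr iterS (rmorph_nat rc 2) /t; ring.
have nmE : nm E <= e / 2.
  apply: le_trans (cs_norm_realM _ _) _; rewrite ger0_norm ?ler0n //.
  apply: le_trans (ler_wpM2l (ler0n _ 2) (cs_norm_sqrt_iterS n)) _.
  rewrite exprS mulrA mulfV ?pnatr_eq0 // mul1r; lra.
have : nm (t * t) <= 1 + nm E.
  rewrite cs_norm_sa_sqr //; apply: le_trans (cs_norm_sqr_le_add_sqr sa_x sa_t) _.
  by rewrite defE; apply: le_trans (cs_normD _ _) _; rewrite cs_norm1.
have -> : 1 - x * x = t * t - E by rewrite -[t * t](addKr (x * x)) defE; ring.
have := cs_normB (t * t) E; lra.
Qed.
End SqrtIteration.

Lemma npos_at_sqr x : st x = x -> npos_at (x * x) (2 * nm x ^+ 2).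
Proof.
move=> sa_x; split; first by rewrite cs_starMC sa_x.
have [x0|x_neq0] := eqVneq (nm x) 0.
  by rewrite (cs_norm_eq0 x0) mulr0 cs_norm0 expr0n mulr0 rmorph0 subr0 cs_norm0.
set k := 2 * nm x ^+ 2.
have k_gt0 : 0 < k by rewrite mulr_gt0 // exprn_gt0 // lt_def x_neq0 cs_norm_ge0.
set c := Num.sqrt k; have c_gt0 : 0 < c by rewrite sqrtr_gt0.
have c2 : c ^+ 2 = k by rewrite sqr_sqrtr // ltW.
set x' := rc c^-1 * x.
have sa_x' : st x' = x' by rewrite cs_starMC cs_star_real sa_x.
have x'_small : nm x' ^+ 2 <= 2^-1.
  have -> : 2^-1 = (c^-1 * nm x) ^+ 2 :> R.
    by rewrite exprMn exprVn c2 /k invfM divfK // expf_neq0.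
  rewrite ler_pXn2r ?nnegrE ?mulr_ge0 ?invr_ge0 ?cs_norm_ge0 ?(ltW c_gt0) //.
  by apply: le_trans (cs_norm_realM _ _) _; rewrite ger0_norm // invr_ge0 ltW.
have -> : rc k - x * x = rc k * (1 - x' * x').
  have kc : k * (c^-1 * c^-1) = 1 by rewrite -invfM -expr2 c2 mulfV ?gt_eqF.
  have kc' : rc k * (rc c^-1 * rc c^-1) = 1 by rewrite -!cs_realM kc cs_real1.
  rewrite mulrBr mulr1; congr (_ - _); rewrite -[LHS]mul1r -kc' /x'; ring.
apply: le_trans (cs_norm_realM _ _) _; rewrite ger0_norm ?(ltW k_gt0) //.
by rewrite ler_piMr ?(ltW k_gt0) // cs_norm_1B_sqr.
Qed.

Lemma cs_cartesian a : exists u v, [/\ st u = u, st v = v & a = u + 'i%C *: v].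
Proof.
exists (rc 2^-1 * (a + st a)), (- ('i%C *: (rc 2^-1 * (a - st a)))); split.
- by rewrite cs_starMC cs_star_real rmorphD /= cs_starK addrC.
- rewrite rmorphN /= cs_star_i cs_starMC cs_star_real rmorphB /= cs_starK opprK.
  by rewrite -scalerN -mulrN opprB.
rewrite scalerN scalerA -expr2 sqr_i scaleN1r opprK -mulrDr addrACA subrr addr0.
rewrite -mulr2n -[a in LHS]mul1r -cs_real_half2 -mulrA; congr (_ * _).
by rewrite (rmorph_nat rc 2) mulr_natl.
Qed.

Lemma npos_mul_star a : npos (a * st a).
Proof.
have [u [v [sa_u sa_v ->]]] := cs_cartesian a.
rewrite mulrC cs_star_addiM //.
by apply: nposD; [exists (2 * nm u ^+ 2) | exists (2 * nm v ^+ 2)]; apply: npos_at_sqr.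
Qed.

Lemma npos_sum_sqr_sub (I : finType) (P : {pred I}) (f : I -> A) c :
  (forall i, st (f i) = f i) -> \sum_(i in P) f i = rc c ->
  npos (\sum_(i in P) f i ^+ 2 - rc (c ^+ 2 / #|P|%:R)).
Proof.
move=> sa_f sum_f.
have sqr_pos g : st g = g -> npos (g ^+ 2).
  by move=> sa_g; rewrite expr2 -{2}sa_g; apply: npos_mul_star.
have [P0|P_gt0] := posnP #|P|.
  by rewrite P0 invr0 mulr0 rmorph0 subr0; apply: npos_sum => i _; apply: sqr_pos.
have K_neq0 : #|P|%:R * 2 != 0 :> R by rewrite mulf_neq0 ?pnatr_eq0 // -lt0n.
have scaled : rc (#|P|%:R * 2) * (\sum_(i in P) f i ^+ 2 - rc (c ^+ 2 / #|P|%:R))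
    = \sum_(i in P) \sum_(j in P) (f i - f j) ^+ 2.
  rewrite sum_sqr_diff sum_f mulrBr -cs_realM.
  have -> : #|P|%:R * 2 * (c ^+ 2 / #|P|%:R) = c ^+ 2 * 2.
    by field; rewrite pnatr_eq0 -lt0n.
  rewrite !cs_realM !cs_real_nat -[RHS]mulr_natr.
  by rewrite -[(\sum_(i in P) _) *+ _]mulr_natl; ring.
have -> : \sum_(i in P) f i ^+ 2 - rc (c ^+ 2 / #|P|%:R)
    = rc (#|P|%:R * 2)^-1 * \sum_(i in P) \sum_(j in P) (f i - f j) ^+ 2.
  by rewrite -scaled mulrA -cs_realM mulVf // cs_real1 mul1r.
apply: npos_realM; first by rewrite invr_ge0 mulr_ge0 ?ler0n.
by apply: npos_sum => i _; apply: npos_sum => j _; apply: sqr_pos; rewrite rmorphB /= !sa_f.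
Qed.

Section Welch.
Variables (d n : nat) (tau : 'I_n -> 'I_d -> A).
Local Notation ip j k := (cs_ip (tau j) (tau k)).

Definition mon (v : 'I_d -> A) (s : seq 'I_d) : A := \prod_(i <- s) v i.

Lemma cs_ip_star (v w : 'I_d -> A) : st (cs_ip v w) = cs_ip w v.
Proof. by rewrite rmorph_sum; apply: eq_bigr => r _ /=; rewrite cs_starM cs_starK. Qed.

Lemma cs_ip_expn (v w : 'I_d -> A) m : cs_ip v w ^+ m
  = \sum_(s in sorted_tuples d m) (mon v s * st (mon w s)) *+ multinomial s.
Proof.
rewrite expr_sum_multinomial; apply: eq_bigr => s _.
by rewrite big_split /= /mon rmorph_prod.
Qed.

Variable m : nat.
Local Notation T := (sorted_tuples d m).

Lemma cs_norm_ipX j k : nm (ip j k ^+ m * ip k j ^+ m) <= nm (ip j k) ^+ (2 * m).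
Proof. by rewrite -[ip k j]cs_ip_star cs_norm_expr_mul_star. Qed.

Lemma sum_ipX_le_norms :
  cs_le (\sum_(j < n) \sum_(k < n) ip j k ^+ m * ip k j ^+ m)
        (rc (\sum_(j < n) \sum_(k < n) nm (ip j k) ^+ (2 * m))).
Proof.
apply: (@npos_at_cs_pos _ (\sum_(j < n) \sum_(k < n) nm (ip j k) ^+ (2 * m))).
apply: npos_at_real_subr.
  rewrite rmorph_sum; apply: eq_bigr => j _ /=; rewrite rmorph_sum; apply: eq_bigr => k _ /=.
  by rewrite cs_starMC !rmorphXn /= !cs_ip_star mulrC.
apply: le_trans (cs_norm_sum _ _ _) (ler_sum _ _) => j _.
apply: le_trans (cs_norm_sum _ _ _) (ler_sum _ _) => k _.
exact: cs_norm_ipX.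
Qed.

Definition gram (s t : m.-tuple 'I_d) : A :=
  \sum_(j < n) mon (tau j) s * st (mon (tau j) t).

Lemma sum_ipX_gram :
  \sum_(j < n) \sum_(k < n) ip j k ^+ m * ip k j ^+ m
  = \sum_(s in T) \sum_(t in T)
      (gram s t * st (gram s t)) *+ (multinomial s * multinomial t).
Proof.
under eq_bigr => j _ do under eq_bigr => k _ do
  rewrite -[ip k j]cs_ip_star -rmorphXn cs_ip_expn rmorph_sum big_distrlr /=.
under eq_bigr do rewrite exchange_big /=.
rewrite exchange_big /=; apply: eq_bigr => s _.
under eq_bigr do rewrite exchange_big /=.
rewrite exchange_big /=; apply: eq_bigr => t _.
rewrite /gram rmorph_sum big_distrlr /= -sumrMnl; apply: eq_bigr => j _.
rewrite -sumrMnl; apply: eq_bigr => k _.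
rewrite rmorphMn /= mulrnAl mulrnAr -mulrnA mulnC !cs_starMC cs_starK.
by congr (_ *+ _); ring.
Qed.

Lemma gram_sa (s : m.-tuple 'I_d) : st (gram s s) = gram s s.
Proof. by rewrite rmorph_sum; apply: eq_bigr => j _ /=; rewrite cs_starM cs_starK mulrC. Qed.

Lemma sum_ipX_diag :
  \sum_(j < n) \sum_(k < n) ip j k ^+ m * ip k j ^+ m
  = \sum_(s in T) \sum_(t in T | t != s)
      (gram s t * st (gram s t)) *+ (multinomial s * multinomial t)
    + \sum_(s in T) (gram s s *+ multinomial s) ^+ 2.
Proof.
rewrite sum_ipX_gram -big_split /=; apply: eq_bigr => s sT.
rewrite (bigD1 s) //= addrC; congr (_ + _).
by rewrite gram_sa expr2 mulrnAl mulrnAr -mulrnA.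
Qed.

Hypothesis tau_unit : forall j, cs_ip (tau j) (tau j) = 1.

Lemma sum_gram_diag : \sum_(s in T) gram s s *+ multinomial s = n%:R.
Proof.
have -> : n%:R = \sum_(j < n) ip j j ^+ m :> A.
  by rewrite -[n in n%:R]card_ord -sumr_const; apply: eq_bigr => j _; rewrite tau_unit expr1n.
under [RHS]eq_bigr do rewrite cs_ip_expn.
by rewrite exchange_big /=; apply: eq_bigr => s _; rewrite -sumrMnl.
Qed.

Lemma npos_sum_ipX_sub :
  npos (\sum_(j < n) \sum_(k < n) ip j k ^+ m * ip k j ^+ m
        - rc (n%:R ^+ 2 / #|T|%:R)).
Proof.
rewrite sum_ipX_diag -addrA; apply: nposD.
  by do 2 apply: npos_sum => ? _; apply/npos_mulrn/npos_mul_star.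
apply: npos_sum_sqr_sub => [s|]; first by rewrite rmorphMn /= gram_sa.
by rewrite sum_gram_diag cs_real_nat.
Qed.

Lemma welch_sum_ipX :
  cs_le (rc (n%:R ^+ 2 / ('C(d + m - 1, m))%:R))
        (\sum_(j < n) \sum_(k < n) ip j k ^+ m * ip k j ^+ m).
Proof. by rewrite /cs_le -card_sorted_tuplesE; apply/npos_cs_pos/npos_sum_ipX_sub. Qed.

Lemma welch_offdiag_norms :
  n%:R ^+ 2 / ('C(d + m - 1, m))%:R - n%:R
    <= \sum_(j < n) \sum_(k < n | j != k) nm (ip j k) ^+ (2 * m).
Proof.
set C : R := ('C(d + m - 1, m))%:R.
have [r S_pos] := npos_sum_ipX_sub; rewrite card_sorted_tuplesE -/C in S_pos.
set S := \sum_(j < n) \sum_(k < n) _ in S_pos.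
set Off := \sum_(j < n) \sum_(k < n | j != k) ip j k ^+ m * ip k j ^+ m.
have SE : S = n%:R + Off.
  rewrite /S /Off -[n in n%:R]card_ord -sumr_const -big_split /=; apply: eq_bigr => j _.
  rewrite (bigD1 j) //= tau_unit expr1n mulr1; congr (_ + _).
  by apply: eq_bigl => k; rewrite eq_sym.
have OffE : Off = rc (n%:R ^+ 2 / C - n%:R) + (S - rc (n%:R ^+ 2 / C)).
  by rewrite SE cs_realB cs_real_nat; ring.
have nm_Off : nm Off <= \sum_(j < n) \sum_(k < n | j != k) nm (ip j k) ^+ (2 * m).
  apply: le_trans (cs_norm_sum _ _ _) (ler_sum _ _) => j _.
  apply: le_trans (cs_norm_sum _ _ _) (ler_sum _ _) => k _.
  exact: cs_norm_ipX.
have [lb_ge0|lb_lt0] := lerP 0 (n%:R ^+ 2 / C - n%:R).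
  by apply: le_trans nm_Off; rewrite OffE; apply: npos_at_norm_ge S_pos lb_ge0.
apply: le_trans (ltW lb_lt0) _.
by do 2 apply: sumr_ge0 => ? _; rewrite exprn_ge0 ?cs_norm_ge0.
Qed.

Lemma welch_max_norms : (2 <= n)%N ->
  (n%:R - 1)^-1 * (n%:R / ('C(d + m - 1, m))%:R - 1)
    <= \big[Num.max/0]_(j < n) \big[Num.max/0]_(k < n | j != k) nm (ip j k) ^+ (2 * m).
Proof.
move=> n_ge2; set M := \big[Num.max/0]_(j < n) _; set C : R := ('C(_, _))%:R.
have n_gt0 : 0 < n%:R :> R by rewrite ltr0n (leq_trans _ n_ge2).
have n1_gt0 : 0 < n%:R - 1 :> R by rewrite subr_gt0 ltr1n.
have := le_trans welch_offdiag_norms (sum_offdiag_le_bigmax _).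
rewrite -/M -/C natrM -subn1 natrB ?(leq_trans _ n_ge2) // => off_le.
rewrite mulrC ler_pdivrMr // -(ler_pM2l n_gt0) mulrBr mulr1 mulrA -expr2.
by apply: le_trans off_le _; rewrite [M * _]mulrC mulrA.
Qed.

End Welch.
End CstarAlgebra.

Theorem theorem2p2 (R : realType) (A : ucCstarAlg R) (d n : nat)
    (tau : 'I_n -> 'I_d -> A) :
  (d <= n)%N ->
  (forall j : 'I_n, cs_ip (tau j) (tau j) = 1) ->
  (forall m : nat, (0 < m)%N ->
     cs_le (\sum_(j < n) \sum_(k < n)
              cs_ip (tau j) (tau k) ^+ m * cs_ip (tau k) (tau j) ^+ m)
           (cs_real A (\sum_(j < n) \sum_(k < n)
              cs_norm (cs_ip (tau j) (tau k)) ^+ (2 * m)))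
     /\
     cs_le (cs_real A (n%:R ^+ 2 / ('C(d + m - 1, m))%:R))
           (\sum_(j < n) \sum_(k < n)
              cs_ip (tau j) (tau k) ^+ m * cs_ip (tau k) (tau j) ^+ m))
  /\
  (cs_le (\sum_(j < n) \sum_(k < n)
            cs_ip (tau j) (tau k) * cs_ip (tau k) (tau j))
         (cs_real A (\sum_(j < n) \sum_(k < n)
            cs_norm (cs_ip (tau j) (tau k)) ^+ 2))
   /\
   cs_le (cs_real A (n%:R ^+ 2 / d%:R))
         (\sum_(j < n) \sum_(k < n)
            cs_ip (tau j) (tau k) * cs_ip (tau k) (tau j)))
  /\
  ((2 <= n)%N ->
   (forall m : nat, (0 < m)%N ->
      \big[Num.max/0]_(j < n) \big[Num.max/0]_(k < n | j != k)
         cs_norm (cs_ip (tau j) (tau k)) ^+ (2 * m)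
      >= (n%:R - 1)^-1 * (n%:R / ('C(d + m - 1, m))%:R - 1))
   /\
   \big[Num.max/0]_(j < n) \big[Num.max/0]_(k < n | j != k)
      cs_norm (cs_ip (tau j) (tau k)) ^+ 2
   >= (n%:R - d%:R) / (d%:R * (n%:R - 1))).
Proof.
move=> _ tau_unit.
have bin_d1 : 'C(d + 1 - 1, 1) = d by rewrite addnK bin1.
split; first by move=> m _; split; [exact: sum_ipX_le_norms | exact: welch_sum_ipX].
split.
  have := sum_ipX_le_norms tau 1; have := welch_sum_ipX 1 tau_unit.
  by rewrite bin_d1 muln1 => ge le; split; [exact: le | exact: ge].
move=> n_ge2; split; first by move=> m _; apply: welch_max_norms.
have d_gt0 : (0 < d)%N.
  have [d0|//] := posnP d; have n_gt0 : (0 < n)%N by apply: leq_trans n_ge2.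
  have := tau_unit (Ordinal n_gt0); rewrite /cs_ip big1 => [/esym/eqP|r _].
    by rewrite oner_eq0.
  by move: (ltn_ord r); rewrite {2}d0.
have := welch_max_norms 1 tau_unit n_ge2; rewrite bin_d1 muln1.
have d_neq0 : d%:R != 0 :> R by rewrite pnatr_eq0 -lt0n.
have n1_neq0 : n%:R - 1 != 0 :> R by rewrite subr_eq0 pnatr_eq1 gtn_eqF.
by congr (_ <= _); field; rewrite n1_neq0 d_neq0.
Qed.
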